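(* Let $d\ge 1$ and $c\ge 1$, let $\mathcal C$ be a finite collection of $c$-fat objects in $\mathbb R^d$, and let $G$ be the intersection graph of $\mathcal C$. Let $t\ge 0$ be an integer and let $\mathcal C^t$ be a collection of nonempty subsets of $\mathcal C$ such that for each $\mathcal X\in\mathcal C^t$ the induced subgraph $G_{\mathcal X}$ of $G$ on $\mathcal X$ is connected and has diameter at most $t$. Identify each $\mathcal X\in\mathcal C^t$ with the object $\bigcup_{O\in\mathcal X}O\subseteq\mathbb R^d$. Then $\mathcal C^t$ is a collection of $c'$-fat objects in $\mathbb R^d$ with $c'\le C_d\cdot c\cdot (t+1)^{2d}$, where $C_d$ is a constant depending only on $d$.
   Context: An object is a bounded subset of $\mathbb R^d$. The size of an object is the side length of its smallest enclosing axis-parallel hypercube; a box of size $r$ is an axis-parallel hypercube of side length $r$. A collection $\mathcal C$ of objects in $\mathbb R^d$ is $c$-fat (for $c\ge 1$) if for every $r\ge 0$ and every box $B$ of size $r$ there is a set of at most $c$ points of $\mathbb R^d$ such that every object of $\mathcal C$ of size at least $r$ that intersects $B$ contains at least one of these points. The intersection graph of $\mathcal C$ has vertex set $\mathcal C$, two objects being adjacent iff they intersect. *)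

From Stdlib Require Vectors.Fin.
From Stdlib Require Import Reals List.
Open Scope R_scope.

Definition point (d : nat) : Type := Fin.t d -> R.

Definition Obj (d : nat) : Type := point d -> Prop.

Definition obj_bounded {d : nat} (O : Obj d) : Prop :=
  exists M : R, forall x, O x -> forall i, Rabs (x i) <= M.

Definition box {d : nat} (a : point d) (r : R) : Obj d :=
  fun x => forall i, a i <= x i <= a i + r.

Definition subset {d : nat} (A B : Obj d) : Prop := forall x, A x -> B x.

Definition is_size {d : nat} (O : Obj d) (s : R) : Prop :=
  0 <= s /\ (exists a, subset O (box a s)) /\
  (forall (s' : R) (a : point d), 0 <= s' -> subset O (box a s') -> s <= s').

Definition size_at_least {d : nat} (O : Obj d) (r : R) : Prop :=
  exists s, is_size O s /\ r <= s.

Definition intersects {d : nat} (A B : Obj d) : Prop := exists x, A x /\ B x.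

Definition fat {d : nat} (Coll : Obj d -> Prop) (c : R) : Prop :=
  forall (r : R) (a : point d), 0 <= r ->
    exists P : list (point d), INR (length P) <= c /\
      forall O, Coll O -> size_at_least O r -> intersects O (box a r) ->
        exists p, In p P /\ O p.

Definition adj {d : nat} (O O' : Obj d) : Prop := O <> O' /\ intersects O O'.

Inductive walk {d : nat} (X : Obj d -> Prop) : Obj d -> Obj d -> nat -> Prop :=
| walk0 : forall O, X O -> walk X O O 0
| walkS : forall O O1 O' n, X O -> adj O O1 -> walk X O1 O' n -> walk X O O' (S n).

Definition connected_diam_le {d : nat} (X : Obj d -> Prop) (t : nat) : Prop :=
  forall O O', X O -> X O' -> exists n, (n <= t)%nat /\ walk X O O' n.

Definition union_obj {d : nat} (X : Obj d -> Prop) : Obj d :=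
  fun x => exists O, X O /\ O x.

(* Cut the box of size r into the scale r' = r/(t+2) and enlarge it by t r'
   on every side: this gives a grid of (3t+2)^d cells of size r', and piercing
   each cell with the c points provided by fatness of the original collection
   pierces every cluster of size at least r meeting the box.  Indeed such a
   cluster X cannot consist only of objects fitting in boxes of size r', for
   then its diameter-t walks would confine its union to a box of size
   (t+1) r' < r.  Following a walk of length at most t from an object meeting
   the box to a large object, the first large object met lies within distance
   t r' of the box, hence meets one of the cells, and has size at least r'. *)

From Stdlib Require Import Reals List Lra Lia Classical FunctionalExtensionality.
From Coquelicot Require Import Rcomplements.
Open Scope R_scope.

Section Geometry.

Variable d : nat.

Definition fits_box (r : R) (O : Obj d) : Prop := exists a, subset O (box a r).

Lemma fits_box_of_coord_diff_le (O : Obj d) (w : R) :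
  (exists x, O x) -> obj_bounded O ->
  (forall x x' i, O x -> O x' -> x i - x' i <= w) ->
  fits_box w O.
Proof.
  intros [x0 Hx0] [M HM] Hdiff.
  pose (E i y := exists x, O x /\ y = - x i).
  assert (Hbound : forall i, bound (E i)).
  { intro i. exists M. intros y [x [Hx ->]].
    pose proof (proj1 (Rabs_le_between _ _) (HM x Hx i)). lra. }
  assert (Hne : forall i, exists y, E i y) by (intro i; exists (- x0 i), x0; auto).
  (* the lower corner is the infimum of each coordinate over O *)
  exists (fun i => - proj1_sig (completeness (E i) (Hbound i) (Hne i))).
  intros x Hx i.
  destruct (completeness (E i) (Hbound i) (Hne i)) as [m [Hub Hlub]]; simpl.
  assert (- x i <= m) by (apply Hub; exists x; auto).
  assert (m <= w - x i).
  { apply Hlub. intros y [x' [Hx' ->]]. specialize (Hdiff x x' i Hx Hx'). lra. }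
  lra.
Qed.

Lemma is_size_exists (O : Obj d) :
  (exists x, O x) -> obj_bounded O -> exists s, is_size O s.
Proof.
  intros Hne Hbd. pose proof Hbd as [M HM].
  pose (D y := y = 0 \/ exists x x' i, O x /\ O x' /\ y = x i - x' i).
  assert (Hbound : bound D).
  { exists (2 * Rabs M). intros y [-> | [x [x' [i [Hx [Hx' ->]]]]]].
    - pose proof (Rabs_pos M). lra.
    - pose proof (proj1 (Rabs_le_between _ _) (HM x Hx i)).
      pose proof (proj1 (Rabs_le_between _ _) (HM x' Hx' i)).
      pose proof (Rle_abs M). lra. }
  (* the size is the largest coordinate difference *)
  destruct (completeness D Hbound (ex_intro _ 0 (or_introl eq_refl))) as [s [Hub Hlub]].
  exists s. split; [|split].
  - apply Hub. now left.
  - apply fits_box_of_coord_diff_le; auto.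
    intros x x' i Hx Hx'. apply Hub. right. eauto 10.
  - intros s' a Hs' Hsub. apply Hlub.
    intros y [-> | [x [x' [i [Hx [Hx' ->]]]]]]; auto.
    pose proof (Hsub x Hx i). pose proof (Hsub x' Hx' i). lra.
Qed.

Lemma size_at_least_of_not_fits_box (O : Obj d) (r : R) :
  (exists x, O x) -> obj_bounded O -> ~ fits_box r O -> size_at_least O r.
Proof.
  intros Hne Hbd Hlarge.
  destruct (is_size_exists O Hne Hbd) as [s Hs]. exists s. split; [exact Hs|].
  destruct (Rle_or_lt r s) as [Hle | Hlt]; [exact Hle|].
  exfalso. apply Hlarge. destruct Hs as [_ [[a Ha] _]].
  exists a. intros x Hx i. specialize (Ha x Hx i). lra.
Qed.

Lemma intersects_box_zero (O : Obj d) (a : point d) : intersects O (box a 0) -> O a.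
Proof.
  intros [x [Hx Hbox]]. replace a with x; [exact Hx|].
  apply functional_extensionality. intro i. specialize (Hbox i). lra.
Qed.

Lemma union_obj_bounded (C : Obj d -> Prop) (l : list (Obj d)) (X : Obj d -> Prop) :
  (forall O, C O <-> In O l) -> (forall O, C O -> obj_bounded O) ->
  (forall O, X O -> C O) -> obj_bounded (union_obj X).
Proof.
  intros Hl Hbd HXC.
  assert (Huniform : exists M, forall O x i, In O l -> O x -> Rabs (x i) <= M).
  { assert (Hbdl : forall O, In O l -> obj_bounded O) by (intros O HO; apply Hbd, Hl, HO).
    clear Hl Hbd HXC. induction l as [|O0 l IH].
    - exists 0. intros O x i [].
    - destruct IH as [M HM]; [intros O HO; apply Hbdl; now right|].
      destruct (Hbdl O0 (or_introl eq_refl)) as [M0 HM0].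
      exists (Rmax M M0). intros O x i [<- | HO] Hx.
      + eapply Rle_trans; [apply HM0; auto | apply Rmax_r].
      + eapply Rle_trans; [apply (HM O x i HO Hx) | apply Rmax_l]. }
  destruct Huniform as [M HM]. exists M.
  intros x [O [HO Hx]] i. apply (HM O); auto. apply Hl, HXC, HO.
Qed.

End Geometry.

Section Walks.

Variables (d : nat) (X : Obj d -> Prop) (r : R).

Lemma walk_coord_diff_le O O' n :
  walk X O O' n -> (forall O, X O -> fits_box d r O) ->
  forall x x' i, O x -> O' x' -> x i - x' i <= INR (S n) * r.
Proof.
  intros Hw Hfit.
  induction Hw as [O HO | O O1 O' n HO Hadj Hw IH]; intros x x' i Hx Hx'.
  - destruct (Hfit O HO) as [a Ha].
    pose proof (Ha x Hx i). pose proof (Ha x' Hx' i). simpl. lra.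
  - destruct (Hfit O HO) as [a Ha]. destruct Hadj as [_ [y [Hy Hy1]]].
    pose proof (Ha x Hx i). pose proof (Ha y Hy i).
    specialize (IH y x' i Hy1 Hx'). rewrite S_INR. lra.
Qed.

Lemma walk_first_large_near O O' n :
  0 <= r -> walk X O O' n -> ~ fits_box d r O' ->
  forall x, O x ->
  exists O'' y, X O'' /\ ~ fits_box d r O'' /\ O'' y /\
    forall i, Rabs (y i - x i) <= INR n * r.
Proof.
  intros Hr Hw. induction Hw as [O HO | O O1 O' n HO Hadj Hw IH]; intros Hlarge x Hx.
  - exists O, x. repeat split; auto. intro i. simpl. rewrite Rminus_diag, Rabs_R0. lra.
  - destruct (classic (fits_box d r O)) as [[a Ha] | Hn].
    + destruct Hadj as [_ [z [Hz Hz1]]].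
      destruct (IH Hlarge z Hz1) as [O'' [y [HX'' [Hl'' [Hy Hyz]]]]].
      exists O'', y. repeat split; auto. intro i.
      pose proof (Ha x Hx i). pose proof (Ha z Hz i).
      pose proof (proj1 (Rabs_le_between' _ _ _) (Hyz i)).
      apply Rabs_le_between'. rewrite S_INR. lra.
    + exists O, x. repeat split; auto. intro i.
      rewrite Rminus_diag, Rabs_R0. apply Rmult_le_pos; [apply pos_INR | exact Hr].
Qed.

End Walks.

Section Clusters.

Variables (d : nat) (X : Obj d -> Prop) (t : nat) (r : R).
Hypothesis Hdiam : connected_diam_le X t.

Lemma union_fits_box_of_members_fit :
  0 <= r -> (exists x, union_obj X x) -> obj_bounded (union_obj X) ->
  (forall O, X O -> fits_box d r O) -> fits_box d ((INR t + 1) * r) (union_obj X).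
Proof.
  intros Hr Hne Hbd Hfit. apply fits_box_of_coord_diff_le; auto.
  intros x x' i [O [HO Hx]] [O' [HO' Hx']].
  destruct (Hdiam O O' HO HO') as [n [Hn Hw]].
  pose proof (walk_coord_diff_le d X r O O' n Hw Hfit x x' i Hx Hx').
  assert (INR (S n) <= INR t + 1) by (rewrite <- S_INR; apply le_INR; lia).
  assert (INR (S n) * r <= (INR t + 1) * r) by (apply Rmult_le_compat_r; lra).
  lra.
Qed.

Lemma large_member_near_union_point x0 :
  0 < r -> obj_bounded (union_obj X) ->
  size_at_least (union_obj X) ((INR t + 2) * r) -> union_obj X x0 ->
  exists O y, X O /\ ~ fits_box d r O /\ O y /\
    forall i, Rabs (y i - x0 i) <= INR t * r.
Proof.
  intros Hr Hbd [s [[_ [_ Hmin]] Hs]] Hx0.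
  destruct (classic (exists O, X O /\ ~ fits_box d r O)) as [[Ol [HXl Hl]] | Hsmall].
  - destruct Hx0 as [O0 [HO0 Hx0]].
    destruct (Hdiam O0 Ol HO0 HXl) as [n [Hn Hw]].
    destruct (walk_first_large_near d X r O0 Ol n (Rlt_le _ _ Hr) Hw Hl x0 Hx0)
      as [O [y [HO [HlO [Hy Hnear]]]]].
    exists O, y. repeat split; auto. intro i. eapply Rle_trans; [apply Hnear|].
    apply Rmult_le_compat_r; [lra | now apply le_INR].
  - exfalso.
    assert (Hfit : forall O, X O -> fits_box d r O).
    { intros O HO. apply NNPP. intro Hl. apply Hsmall. eauto. }
    destruct (union_fits_box_of_members_fit (Rlt_le _ _ Hr) (ex_intro _ x0 Hx0) Hbd Hfit) as [a Ha].
    pose proof (pos_INR t).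
    assert (s <= (INR t + 1) * r) by (apply (Hmin _ a); [apply Rmult_le_pos; lra | exact Ha]).
    nra.
Qed.

End Clusters.

Fixpoint all_fin (n : nat) : list (Fin.t n) :=
  match n with
  | O => nil
  | S n' => Fin.F1 :: map Fin.FS (all_fin n')
  end.

Lemma all_fin_complete n (i : Fin.t n) : In i (all_fin n).
Proof. induction i; simpl; auto. right. now apply in_map. Qed.

Lemma length_all_fin n : length (all_fin n) = n.
Proof. induction n as [|n IH]; simpl; [reflexivity|]. now rewrite length_map, IH. Qed.

Lemma length_flat_map_le {A B : Type} (f : A -> list B) (l : list A) (c : R) :
  (forall a, INR (length (f a)) <= c) ->
  INR (length (flat_map f l)) <= INR (length l) * c.
Proof.
  intro Hf. induction l as [|a l IH]; cbn [flat_map length].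
  - simpl. lra.
  - rewrite length_app, plus_INR, S_INR, Rmult_plus_distr_r, Rmult_1_l.
    specialize (Hf a). lra.
Qed.

Lemma interval_cell (n : nat) (r y : R) : 0 < r -> 0 <= y <= INR (S n) * r ->
  exists k, (k < S n)%nat /\ INR k * r <= y <= INR k * r + r.
Proof.
  revert y. induction n as [|n IH]; intros y Hr Hy.
  - exists 0%nat. simpl in *. split; [lia | lra].
  - destruct (Rle_or_lt y r) as [Hle | Hlt].
    + exists 0%nat. simpl. split; [lia | lra].
    + destruct (IH (y - r)) as [k [Hk Hk2]]; auto; [rewrite !S_INR in *; lra|].
      exists (S k). rewrite S_INR. split; [lia | lra].
Qed.

Section Grid.

Variable d : nat.

Definition upd (f : Fin.t d -> nat) (i : Fin.t d) (k : nat) : Fin.t d -> nat :=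
  fun j => if Fin.eq_dec j i then k else f j.

(* all functions idx -> {0, ..., N-1}, extended by 0 outside idx *)
Fixpoint grid (N : nat) (idx : list (Fin.t d)) : list (Fin.t d -> nat) :=
  match idx with
  | nil => (fun _ => 0%nat) :: nil
  | i :: idx' => flat_map (fun f => map (upd f i) (seq 0 N)) (grid N idx')
  end.

Lemma grid_complete (N : nat) (P : Fin.t d -> nat -> Prop) idx :
  (forall i, In i idx -> exists k, (k < N)%nat /\ P i k) ->
  exists f, In f (grid N idx) /\ forall i, In i idx -> P i (f i).
Proof.
  induction idx as [|i0 idx IH]; intros HP.
  - exists (fun _ => 0%nat). split; [now left | intros i []].
  - destruct IH as [f [Hf HfP]]; [intros i Hi; apply HP; now right|].
    destruct (HP i0 (or_introl eq_refl)) as [k0 [Hk0 HPk0]].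
    exists (upd f i0 k0). split.
    + apply in_flat_map. exists f. split; auto. apply in_map, in_seq. lia.
    + intros i Hi. unfold upd. destruct (Fin.eq_dec i i0) as [-> | Hne]; auto.
      apply HfP. destruct Hi as [-> | Hi]; [congruence | auto].
Qed.

Lemma length_grid_le (N : nat) (idx : list (Fin.t d)) :
  INR (length (grid N idx)) <= INR N ^ length idx.
Proof.
  induction idx as [|i idx IH]; simpl; [lra|].
  eapply Rle_trans.
  - apply length_flat_map_le with (c := INR N). intro f.
    rewrite length_map, length_seq. lra.
  - rewrite Rmult_comm. apply Rmult_le_compat_l; [apply pos_INR | exact IH].
Qed.

Definition grid_corner (b : point d) (r : R) (f : Fin.t d -> nat) : point d :=
  fun i => b i + INR (f i) * r.

Lemma box_grid_cover (n : nat) (b y : point d) (r : R) :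
  0 < r -> box b (INR (S n) * r) y ->
  exists f, In f (grid (S n) (all_fin d)) /\ box (grid_corner b r f) r y.
Proof.
  intros Hr Hy.
  destruct (grid_complete (S n)
              (fun i k => b i + INR k * r <= y i <= b i + INR k * r + r) (all_fin d))
    as [f [Hf HfP]].
  - intros i _. destruct (interval_cell n r (y i - b i)) as [k [Hk Hcell]]; auto.
    + specialize (Hy i). lra.
    + exists k. split; [exact Hk | lra].
  - exists f. split; [exact Hf|]. intro i. apply HfP, all_fin_complete.
Qed.

End Grid.

Section Piercing.

Variables (d : nat) (Coll : Obj d -> Prop) (c : R).
Hypothesis Hfat : fat Coll c.

Lemma fat_pierce_boxes (r : R) (L : list (point d)) :
  0 <= r ->
  exists P : list (point d), INR (length P) <= INR (length L) * c /\
    forall O a, Coll O -> size_at_least O r -> In a L -> intersects O (box a r) ->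
      exists p, In p P /\ O p.
Proof.
  intro Hr. induction L as [|a L [P [HP Hpierce]]].
  - exists nil. split; [simpl; lra | intros O a _ _ []].
  - destruct (Hfat r a Hr) as [Pa [HPa Hpierce_a]].
    exists (Pa ++ P). split.
    + rewrite length_app, plus_INR. cbn [length].
      rewrite S_INR, Rmult_plus_distr_r, Rmult_1_l. lra.
    + intros O a' HO Hsize [-> | Ha'] Hmeet.
      * destruct (Hpierce_a O HO Hsize Hmeet) as [p [Hp HOp]].
        exists p. split; [apply in_or_app; now left | exact HOp].
      * destruct (Hpierce O a' HO Hsize Ha' Hmeet) as [p [Hp HOp]].
        exists p. split; [apply in_or_app; now right | exact HOp].
Qed.

Lemma fat_pierce_grid_box (n : nat) (b : point d) (r : R) :
  0 <= c -> 0 < r ->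
  exists P : list (point d), INR (length P) <= INR (S n) ^ d * c /\
    forall O y, Coll O -> size_at_least O r -> O y -> box b (INR (S n) * r) y ->
      exists p, In p P /\ O p.
Proof.
  intros Hc Hr.
  destruct (fat_pierce_boxes r (map (grid_corner d b r) (grid d (S n) (all_fin d))))
    as [P [HP Hpierce]]; [lra|].
  exists P. split.
  - eapply Rle_trans; [exact HP|]. apply Rmult_le_compat_r; [exact Hc|].
    rewrite length_map.
    pose proof (length_grid_le d (S n) (all_fin d)) as Hlen.
    now rewrite length_all_fin in Hlen.
  - intros O y HO Hsize Hy Hbox.
    destruct (box_grid_cover d n b y r Hr Hbox) as [f [Hf Hcell]].
    apply (Hpierce O (grid_corner d b r f) HO Hsize); [now apply in_map | now exists y].
Qed.

End Piercing.

Lemma grid_count_le (d t : nat) :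
  INR (S (3 * t + 1)) ^ d <= 3 ^ d * (INR t + 1) ^ (2 * d).
Proof.
  pose proof (pos_INR t).
  eapply Rle_trans.
  - apply pow_incr with (y := 3 * (INR t + 1)).
    rewrite S_INR, plus_INR, mult_INR. simpl. split; lra.
  - rewrite Rpow_mult_distr. apply Rmult_le_compat_l; [apply pow_le; lra|].
    apply Rle_pow; [lra | lia].
Qed.

Theorem lemma3p2 :
  forall d : nat, (1 <= d)%nat ->
  exists Cd : R,
  forall (c : R) (C : Obj d -> Prop) (t : nat) (Ct : (Obj d -> Prop) -> Prop),
    1 <= c ->
    (exists l : list (Obj d), forall O, C O <-> In O l) ->
    (forall O, C O -> obj_bounded O) ->
    fat C c ->
    (forall X, Ct X ->
       (forall O, X O -> C O) /\ (exists O, X O) /\ connected_diam_le X t) ->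
    exists c' : R,
      c' <= Cd * c * (INR t + 1) ^ (2 * d) /\
      (forall X, Ct X -> obj_bounded (union_obj X)) /\
      fat (fun U => exists X, Ct X /\ U = union_obj X) c'.
Proof.
  intros d _. exists (3 ^ d).
  intros c C t Ct Hc [l Hl] Hbd Hfat HCt.
  assert (Hub : forall X, Ct X -> obj_bounded (union_obj X)).
  { intros X HX. apply (union_obj_bounded d C l); auto. apply (HCt X HX). }
  pose proof (pos_INR t).
  exists (INR (S (3 * t + 1)) ^ d * c). split; [|split; [exact Hub|]].
  - rewrite Rmult_assoc, (Rmult_comm c), <- Rmult_assoc.
    apply Rmult_le_compat_r; [lra | apply grid_count_le].
  - intros r a Hr. destruct (Rle_lt_or_eq_dec 0 r Hr) as [Hrpos | <-].
    2:{ exists (a :: nil). split.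
        - assert (1 <= INR (S (3 * t + 1)) ^ d).
          { apply pow_R1_Rle. rewrite S_INR. pose proof (pos_INR (3 * t + 1)). lra. }
          change (INR (length (a :: nil))) with 1. nra.
        - intros U _ _ Hmeet. exists a. split; [now left | now apply intersects_box_zero]. }
    set (r' := r / (INR t + 2)).
    assert (Hr' : 0 < r') by (apply Rdiv_lt_0_compat; lra).
    assert (Hrr' : r = (INR t + 2) * r') by (unfold r'; field; lra).
    destruct (fat_pierce_grid_box d C c Hfat (3 * t + 1) (fun i => a i - INR t * r') r')
      as [P [HP Hpierce]]; [lra | exact Hr'|].
    exists P. split; [exact HP|].
    intros U [X [HX ->]] Hsize [x0 [Hx0 Hbx0]].
    destruct (HCt X HX) as [HXC [_ Hdiam]].
    destruct (large_member_near_union_point d X t r' Hdiam x0 Hr' (Hub X HX))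
      as [O [y [HO [Hlarge [Hy Hnear]]]]]; [now rewrite <- Hrr' | exact Hx0|].
    destruct (Hpierce O y) as [p [Hp HOp]].
    + apply HXC, HO.
    + apply size_at_least_of_not_fits_box; [now exists y | apply Hbd, HXC, HO | exact Hlarge].
    + exact Hy.
    + intro i. specialize (Hbx0 i).
      pose proof (proj1 (Rabs_le_between' _ _ _) (Hnear i)).
      rewrite S_INR, plus_INR, mult_INR. simpl. lra.
    + exists p. split; [exact Hp | now exists O].
Qed.
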